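(* Two elements $a,b\in C\ell_2\setminus\{0\}$ are pseudosimilar if and only if one of the following holds: (1) $\bar a+b=0$; (2) $H_a=H_b$ and $H_{\bar a+b}\neq 0$.
   Context: $C\ell_2$ is the 4-dimensional real associative algebra with basis $1,e_1,e_2,e_3$ and multiplication $e_1^2=e_2^2=1$, $e_3^2=-1$, $e_1e_2=e_3=-e_2e_1$, $e_1e_3=e_2=-e_3e_1$, $e_3e_2=e_1=-e_2e_3$. For $a=a_0+a_1e_1+a_2e_2+a_3e_3$ ($a_i\in\mathbb{R}$): $\bar a=a_0-a_1e_1-a_2e_2-a_3e_3$, $H_a=a\bar a=a_0^2-a_1^2-a_2^2+a_3^2$. $Z(C\ell_2)=\{a:H_a=0\}$. Elements $a,b$ are pseudosimilar if there exists $u\in C\ell_2\setminus Z(C\ell_2)$ with $au=\bar u b$. *)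

From Stdlib Require Import Reals.
Open Scope R_scope.

(* a = c0 + c1 e1 + c2 e2 + c3 e3 *)
Record Cl2 := mkCl2 { c0 : R; c1 : R; c2 : R; c3 : R }.

Definition cl_zero : Cl2 := mkCl2 0 0 0 0.

Definition cl_add (a b : Cl2) : Cl2 :=
  mkCl2 (c0 a + c0 b) (c1 a + c1 b) (c2 a + c2 b) (c3 a + c3 b).

(* Multiplication from e1^2 = e2^2 = 1, e3^2 = -1, e1e2 = e3 = -e2e1,
   e1e3 = e2 = -e3e1, e3e2 = e1 = -e2e3, extended bilinearly. *)
Definition cl_mul (a b : Cl2) : Cl2 :=
  mkCl2 (c0 a * c0 b + c1 a * c1 b + c2 a * c2 b - c3 a * c3 b)
        (c0 a * c1 b + c1 a * c0 b - c2 a * c3 b + c3 a * c2 b)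
        (c0 a * c2 b + c2 a * c0 b + c1 a * c3 b - c3 a * c1 b)
        (c0 a * c3 b + c3 a * c0 b + c1 a * c2 b - c2 a * c1 b).

Definition cl_bar (a : Cl2) : Cl2 := mkCl2 (c0 a) (- c1 a) (- c2 a) (- c3 a).

(* H_a = a0^2 - a1^2 - a2^2 + a3^2 (the scalar a * bar a) *)
Definition H (a : Cl2) : R :=
  c0 a ^ 2 - c1 a ^ 2 - c2 a ^ 2 + c3 a ^ 2.

Definition inZ (a : Cl2) : Prop := H a = 0.

Definition pseudosimilar (a b : Cl2) : Prop :=
  exists u : Cl2, ~ inZ u /\ cl_mul a u = cl_mul (cl_bar u) b.

(* Conjugation is an anti-involution of Cl_2 with x * bar x = bar x * x = H_x,
   and H is multiplicative, so u is invertible exactly when H_u <> 0.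
   If a u = bar u b, then H_a H_u = H_u H_b gives H_a = H_b, and
   bar u (bar a + b) = bar (a u) + a u is the real scalar 2 Re(a u): if it is 0,
   then bar a + b = 0 because u is invertible; otherwise H_u H_(bar a + b) > 0.
   Conversely, under (2) the element u = bar a + b works, since
   a u = H_a + a b and bar u b = a b + H_b; under (1) any invertible u with
   Re(a u) = 0 works, because then a u = - bar (a u) = bar u b. *)
From Stdlib Require Import Reals Lra Psatz.
Open Scope R_scope.

Definition cl_scalar (r : R) : Cl2 := mkCl2 r 0 0 0.

Ltac cl_ring :=
  repeat match goal with x : Cl2 |- _ => destruct x end;
  unfold cl_mul, cl_add, cl_bar, cl_scalar, cl_zero; cbn; f_equal; ring.

Lemma cl_add_comm (x y : Cl2) : cl_add x y = cl_add y x.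
Proof. cl_ring. Qed.

Lemma cl_mul_assoc (x y z : Cl2) :
  cl_mul x (cl_mul y z) = cl_mul (cl_mul x y) z.
Proof. cl_ring. Qed.

Lemma cl_mul_addr (x y z : Cl2) :
  cl_mul x (cl_add y z) = cl_add (cl_mul x y) (cl_mul x z).
Proof. cl_ring. Qed.

Lemma cl_mul_addl (x y z : Cl2) :
  cl_mul (cl_add x y) z = cl_add (cl_mul x z) (cl_mul y z).
Proof. cl_ring. Qed.

Lemma cl_mul_zero_r (x : Cl2) : cl_mul x cl_zero = cl_zero.
Proof. cl_ring. Qed.

Lemma cl_add_inv_uniq (p q r : Cl2) :
  cl_add p q = cl_zero -> cl_add p r = cl_zero -> q = r.
Proof.
  destruct p, q, r; unfold cl_add, cl_zero; cbn.
  intros E F; injection E; injection F; intros; f_equal; lra.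
Qed.

Lemma cl_bar_involutive (x : Cl2) : cl_bar (cl_bar x) = x.
Proof. cl_ring. Qed.

Lemma cl_bar_add (x y : Cl2) : cl_bar (cl_add x y) = cl_add (cl_bar x) (cl_bar y).
Proof. cl_ring. Qed.

Lemma cl_bar_mul (x y : Cl2) : cl_bar (cl_mul x y) = cl_mul (cl_bar y) (cl_bar x).
Proof. cl_ring. Qed.

Lemma cl_add_bar (x : Cl2) : cl_add x (cl_bar x) = cl_scalar (2 * c0 x).
Proof. cl_ring. Qed.

Lemma cl_mul_bar_r (x : Cl2) : cl_mul x (cl_bar x) = cl_scalar (H x).
Proof. unfold H; cl_ring. Qed.

Lemma cl_mul_bar_l (x : Cl2) : cl_mul (cl_bar x) x = cl_scalar (H x).
Proof. unfold H; cl_ring. Qed.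

Lemma H_mul (x y : Cl2) : H (cl_mul x y) = H x * H y.
Proof. destruct x, y; unfold H, cl_mul; cbn; ring. Qed.

Lemma H_bar (x : Cl2) : H (cl_bar x) = H x.
Proof. destruct x; unfold H, cl_bar; cbn; ring. Qed.

Lemma H_scalar (r : R) : H (cl_scalar r) = r ^ 2.
Proof. unfold H, cl_scalar; cbn; ring. Qed.

Lemma cl_mul_scalar_eq0 (r : R) (x : Cl2) :
  r <> 0 -> cl_mul (cl_scalar r) x = cl_zero -> x = cl_zero.
Proof.
  destruct x as [x0 x1 x2 x3]; unfold cl_mul, cl_scalar, cl_zero; cbn.
  intros Hr E; injection E; intros E3 E2 E1 E0.
  f_equal; apply (Rmult_eq_reg_l r); lra.
Qed.

Lemma cl_mul_left_reg (u x : Cl2) :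
  ~ inZ u -> cl_mul u x = cl_zero -> x = cl_zero.
Proof.
  intros Hu E; apply (cl_mul_scalar_eq0 (H u)); [exact Hu |].
  rewrite <- cl_mul_bar_l, <- cl_mul_assoc, E; apply cl_mul_zero_r.
Qed.
Lemma H_eq_of_pseudosimilar (a b u : Cl2) :
  ~ inZ u -> cl_mul a u = cl_mul (cl_bar u) b -> H a = H b.
Proof.
  intros Hu E; apply (f_equal H) in E; rewrite !H_mul, H_bar in E.
  apply (Rmult_eq_reg_r (H u)); [lra | exact Hu].
Qed.

Lemma cl_mul_bar_add_of_pseudosimilar (a b u : Cl2) :
  cl_mul a u = cl_mul (cl_bar u) b ->
  cl_mul (cl_bar u) (cl_add (cl_bar a) b) = cl_scalar (2 * c0 (cl_mul a u)).
Proof.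
  intros E; rewrite cl_mul_addr, <- E, <- cl_bar_mul, cl_add_comm.
  apply cl_add_bar.
Qed.

Lemma pseudosimilar_witness_bar_add (a b : Cl2) :
  H a = H b -> cl_mul a (cl_add (cl_bar a) b) = cl_mul (cl_bar (cl_add (cl_bar a) b)) b.
Proof.
  intros Hab.
  rewrite cl_bar_add, cl_bar_involutive, cl_mul_addr, cl_mul_addl,
    cl_mul_bar_r, cl_mul_bar_l, Hab.
  apply cl_add_comm.
Qed.

Lemma pseudosimilar_witness_opp_bar (a b u : Cl2) :
  cl_add (cl_bar a) b = cl_zero -> c0 (cl_mul a u) = 0 ->
  cl_mul a u = cl_mul (cl_bar u) b.
Proof.
  intros Eab Hre; apply (cl_add_inv_uniq (cl_mul (cl_bar u) (cl_bar a))).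
  - rewrite <- cl_bar_mul, cl_add_comm, cl_add_bar, Hre; cl_ring.
  - rewrite <- cl_mul_addr, Eab; apply cl_mul_zero_r.
Qed.

(* The candidates u = a3 + a0 e3 and u = a2 e1 - a1 e2 both give Re(a u) = 0,
   with H_u = a0^2 + a3^2 and H_u = -(a1^2 + a2^2) respectively. *)
Lemma exists_invertible_pure_mul (a : Cl2) :
  a <> cl_zero -> exists u, ~ inZ u /\ c0 (cl_mul a u) = 0.
Proof.
  destruct a as [a0 a1 a2 a3]; unfold inZ, H, cl_mul, cl_zero; cbn; intros Ha.
  destruct (Req_dec (a0 ^ 2 + a3 ^ 2) 0) as [Z | Z].
  - exists (mkCl2 0 a2 (- a1) 0); cbn; split; [| ring].
    intro C; apply Ha; f_equal; nra.
  - exists (mkCl2 a3 0 0 a0); cbn; split; [| ring].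
    intro C; apply Z; lra.
Qed.

Theorem theorem5p3 (a b : Cl2) (ha : a <> cl_zero) (hb : b <> cl_zero) :
  pseudosimilar a b <->
  (cl_add (cl_bar a) b = cl_zero \/
   (H a = H b /\ H (cl_add (cl_bar a) b) <> 0)).
Proof.
  split.
  - intros [u [Hu E]].
    pose proof (cl_mul_bar_add_of_pseudosimilar a b u E) as Hs.
    destruct (Req_dec (c0 (cl_mul a u)) 0) as [Hre | Hre].
    + left; apply (cl_mul_left_reg (cl_bar u)).
      * unfold inZ; rewrite H_bar; exact Hu.
      * rewrite Hs, Hre; cl_ring.
    + right; split; [exact (H_eq_of_pseudosimilar a b u Hu E) |].
      intro Hx; apply (f_equal H) in Hs.
      rewrite H_mul, Hx, H_scalar in Hs; nra.
  - intros [Eab | [Hab Hx]].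
    + destruct (exists_invertible_pure_mul a ha) as [u [Hu Hre]].
      exists u; split; [exact Hu |].
      exact (pseudosimilar_witness_opp_bar a b u Eab Hre).
    + exists (cl_add (cl_bar a) b); split; [exact Hx |].
      exact (pseudosimilar_witness_bar_add a b Hab).
Qed.
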